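(* Let $G=(V,q)$ be a reversible, stochastically complete graph with heat semigroup $P_t$, and let $\widetilde G=(V\times V,\widetilde q)$ be a coupling graph of $G$ with heat semigroup $\widetilde P_t$. Then for all $f\in\ell_\infty(V)$ and $t\ge0$, \[ \widetilde P_t(1\otimes f)=1\otimes P_tf\qquad\text{and}\qquad \widetilde P_t(f\otimes 1)=P_tf\otimes 1. \]
   Context: A graph $G=(V,q)$ consists of a countable set $V$ and a function $q:V\times V\to[0,\infty)$ such that $\#\{y:q(x,y)>0\}<\infty$ for every $x\in V$; its Laplacian is $\Delta f(x)=\sum_y q(x,y)(f(y)-f(x))$. $G$ is reversible if there is $m:V\to(0,\infty)$ with $q(x,y)m(x)=q(y,x)m(y)$. $\ell_\infty(V)$ is the space of bounded real functions. Heat semigroup of any graph: for finite $S\subset V$ let $q_S(x,y)=q(x,y)1_S(x)$ with Laplacian $\Delta_S$, and $P^S_tf:=\sum_{k\ge0}\frac{t^k\Delta_S^k(f1_S)}{k!}$; for $f\in\ell_\infty(V)$, $P_tf:=\lim_{i}P_t^{S_i}f$ pointwise along any increasing exhaustion of $V$ by finite sets $S_i$ (the limit exists and is independent of the exhaustion). $G$ is stochastically complete if $P_t1=1$ for all $t\ge0$. $(f\otimes g)(x,y)=f(x)g(y)$. A graph $\widetilde G=(V\times V,\widetilde q)$ with Laplacian $\widetilde\Delta$ is a coupling graph of $G$ if $\widetilde\Delta(f\otimes 1)=\Delta f\otimes 1$ and $\widetilde\Delta(1\otimes f)=1\otimes\Delta f$ for all $f:V\to\mathbb R$. *)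

From Stdlib Require Import Reals List Classical ClassicalEpsilon.
Import ListNotations.
From Stdlib Require Import Factorial.
Open Scope R_scope.

Definition countable (V : Type) : Prop :=
  exists enc : V -> nat, forall x y, enc x = enc y -> x = y.

Definition is_graph {V : Type} (q : V -> V -> R) : Prop :=
  (forall x y, 0 <= q x y) /\
  (forall x, exists l : list V, forall y, q x y > 0 -> In y l).

(* Sum of a finitely supported function; 0 if the support is not finite
   (never used in that case). Independent of the chosen duplicate-free
   covering list. *)
Definition fsum {V : Type} (g : V -> R) : R :=
  match excluded_middle_informative
          (exists l : list V, NoDup l /\ forall y, g y <> 0 -> In y l) with
  | left H =>
      let l := proj1_sig (constructive_indefinite_description _ H) in
      fold_right Rplus 0 (map g l)
  | right _ => 0
  end.

Definition lap {V : Type} (q : V -> V -> R) (f : V -> R) : V -> R :=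
  fun x => fsum (fun y => q x y * (f y - f x)).

Definition reversible {V : Type} (q : V -> V -> R) : Prop :=
  exists m : V -> R, (forall x, 0 < m x) /\ (forall x y, q x y * m x = q y x * m y).

Definition bounded_fun {V : Type} (f : V -> R) : Prop :=
  exists M, forall x, Rabs (f x) <= M.

Definition ind {V : Type} (S : list V) (x : V) : R :=
  if excluded_middle_informative (In x S) then 1 else 0.

Definition qrestr {V : Type} (q : V -> V -> R) (S : list V) : V -> V -> R :=
  fun x y => q x y * ind S x.

Definition PS_term {V : Type} (q : V -> V -> R) (S : list V) (t : R)
  (f : V -> R) (x : V) (k : nat) : R :=
  t ^ k * Nat.iter k (lap (qrestr q S)) (fun y => f y * ind S y) x / INR (fact k).

Definition PS {V : Type} (q : V -> V -> R) (S : list V) (t : R) (f : V -> R) : V -> R :=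
  fun x =>
    match excluded_middle_informative
            (exists l, Un_cv (fun N => sum_f_R0 (PS_term q S t f x) N) l) with
    | left H => proj1_sig (constructive_indefinite_description _ H)
    | right _ => 0
    end.

Definition exhaustion {V : Type} (S : nat -> list V) : Prop :=
  (forall i x, In x (S i) -> In x (S (Datatypes.S i))) /\
  (forall x, exists i, In x (S i)).

(* P_t f (x) := lim_i P^{S_i}_t f (x), the common limit along every
   increasing exhaustion (exists and is exhaustion independent). *)
Definition Pt {V : Type} (q : V -> V -> R) (t : R) (f : V -> R) : V -> R :=
  fun x =>
    match excluded_middle_informative
            (exists l, forall S, exhaustion S ->
               Un_cv (fun i => PS q (S i) t f x) l) with
    | left H => proj1_sig (constructive_indefinite_description _ H)
    | right _ => 0
    end.

Definition stoch_complete {V : Type} (q : V -> V -> R) : Prop :=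
  forall t, 0 <= t -> Pt q t (fun _ => 1) = (fun _ => 1).

Definition tensor {V : Type} (f g : V -> R) : V * V -> R :=
  fun p => f (fst p) * g (snd p).

Definition coupling_graph {V : Type} (q : V -> V -> R)
  (qt : V * V -> V * V -> R) : Prop :=
  is_graph qt /\
  (forall f : V -> R, lap qt (tensor f (fun _ => 1)) = tensor (lap q f) (fun _ => 1)) /\
  (forall f : V -> R, lap qt (tensor (fun _ => 1) f) = tensor (fun _ => 1) (lap q f)).

(* Let Δ_L be the Laplacian of the graph restricted to a finite set L and let
   c dominate the degrees on L.  Then Kshift = Δ_L + c 1_L has nonnegative
   coefficients, and the binomial theorem turns the defining series of the
   truncated semigroup into  e^(ct) P^L_t f = Σ_n t^n Kshift^n (f 1_L) / n!.
   Every property of P^L_t we need follows from this positive representation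
   and a comparison principle for the iterates of Kshift: linearity,
   0 <= P^L_t g <= N for 0 <= g <= N, and monotonicity in L.  Consequently, for
   0 <= g <= N, P^{S_i}_t g increases to sup_L P^L_t g along every exhaustion,
   and a bounded f is handled by writing f = (f + M) - M.

   For the coupling graph, both coordinate projections intertwine the
   Laplacians, which transports the comparison principle between the two
   graphs: P^Lt_t (g ∘ snd) <= P^(snd Lt)_t g (upper bound), while on a
   rectangle T' × T,  P^(T'×T)_t (g ∘ snd) >= P^T_t g - N (1 - P^T'_t 1)
   (lower bound).  Stochastic completeness makes the defect N (1 - P^T'_t 1)
   small, so both sides have the same limit. *)
From Stdlib Require Import Reals List Classical ClassicalEpsilon Permutation Lra Lia
  FunctionalExtensionality Factorial.
From Coquelicot Require Import Coquelicot.
Import ListNotations.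
Open Scope R_scope.

Definition lsum {W : Type} (l : list W) (g : W -> R) : R := fold_right Rplus 0 (map g l).

Lemma lsum_lin {W : Type} (l : list W) (a b : R) (g h : W -> R) :
  lsum l (fun y => a * g y + b * h y) = a * lsum l g + b * lsum l h.
Proof. induction l as [|y l IH]; unfold lsum in *; simpl; [ring | rewrite IH; ring]. Qed.

Lemma lsum_le {W : Type} (l : list W) (g h : W -> R) :
  (forall y, g y <= h y) -> lsum l g <= lsum l h.
Proof.
  intros Hgh. induction l as [|y l IH]; unfold lsum in *; simpl; [lra|].
  apply Rplus_le_compat; auto.
Qed.

Lemma lsum_perm {W : Type} (l1 l2 : list W) (g : W -> R) :
  Permutation l1 l2 -> lsum l1 g = lsum l2 g.
Proof. induction 1; unfold lsum in *; simpl in *; lra. Qed.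

Definition nonzero {W : Type} (g : W -> R) (y : W) : bool :=
  if Req_EM_T (g y) 0 then false else true.

Lemma lsum_filter_nonzero {W : Type} (l : list W) (g : W -> R) :
  lsum (filter (nonzero g) l) g = lsum l g.
Proof.
  induction l as [|y l IH]; [reflexivity|]. simpl. unfold nonzero at 1.
  destruct (Req_EM_T (g y) 0) as [E|E]; unfold lsum in *; simpl; rewrite IH; [rewrite E|]; ring.
Qed.

(* A sum over a duplicate-free list covering the support of [g] does not
   depend on the list: both reduce to a permutation of the support. *)
Lemma lsum_support_indep {W : Type} (l1 l2 : list W) (g : W -> R) :
  NoDup l1 -> NoDup l2 ->
  (forall y, g y <> 0 -> In y l1) -> (forall y, g y <> 0 -> In y l2) ->
  lsum l1 g = lsum l2 g.
Proof.
  intros N1 N2 C1 C2.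
  rewrite <- (lsum_filter_nonzero l1), <- (lsum_filter_nonzero l2).
  apply lsum_perm, NoDup_Permutation; try apply NoDup_filter; auto.
  intros y. rewrite !filter_In. unfold nonzero.
  destruct (Req_EM_T (g y) 0) as [E|E]; split; intros [Hy Hb];
    try discriminate; split; auto.
Qed.

Lemma fsum_lsum {W : Type} (l : list W) (g : W -> R) :
  NoDup l -> (forall y, g y <> 0 -> In y l) -> fsum g = lsum l g.
Proof.
  intros N C. unfold fsum.
  destruct (excluded_middle_informative _) as [H|H].
  - destruct (constructive_indefinite_description _ H) as [l0 [N0 C0]]; simpl.
    apply lsum_support_indep; auto.
  - exfalso. apply H. eauto.
Qed.

Definition wsum {W : Type} (q : W -> W -> R) (x : W) (g : W -> R) : R :=
  fsum (fun y => q x y * g y).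

Definition deg {W : Type} (q : W -> W -> R) (x : W) : R := wsum q x (fun _ => 1).

Section LocallyFinite.
Context {W : Type} (q : W -> W -> R) (Hg : is_graph q).

Lemma wsum_list (x : W) :
  exists l, forall g, wsum q x g = lsum l (fun y => q x y * g y).
Proof.
  destruct Hg as [Hpos Hfin]. destruct (Hfin x) as [l0 Hl0].
  exists (nodup (fun a b => excluded_middle_informative (a = b)) l0). intros g.
  apply fsum_lsum; [apply NoDup_nodup|]. intros y Hy. apply nodup_In, Hl0.
  destruct (Req_dec (q x y) 0) as [E|E]; [rewrite E, Rmult_0_l in Hy; tauto|].
  specialize (Hpos x y). lra.
Qed.

Lemma wsum_lin (x : W) (a b : R) (g h : W -> R) :
  wsum q x (fun y => a * g y + b * h y) = a * wsum q x g + b * wsum q x h.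
Proof.
  destruct (wsum_list x) as [l Hl]. rewrite !Hl, <- lsum_lin.
  f_equal. apply functional_extensionality. intros y. ring.
Qed.

Lemma wsum_ext (x : W) (g h : W -> R) :
  (forall y, g y = h y) -> wsum q x g = wsum q x h.
Proof. intros E. f_equal. apply functional_extensionality, E. Qed.

Lemma wsum_scal (x : W) (a : R) (g : W -> R) : wsum q x (fun y => a * g y) = a * wsum q x g.
Proof.
  rewrite (wsum_ext x _ (fun y => a * g y + 0 * g y)) by (intros; ring).
  rewrite wsum_lin. ring.
Qed.

Lemma wsum_const (x : W) (K : R) : wsum q x (fun _ => K) = K * deg q x.
Proof. unfold deg. rewrite <- wsum_scal. apply wsum_ext. intros. ring. Qed.

Lemma wsum_mono (x : W) (g h : W -> R) :
  (forall y, g y <= h y) -> wsum q x g <= wsum q x h.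
Proof.
  intros Hgh. destruct (wsum_list x) as [l Hl]. rewrite !Hl.
  apply lsum_le. intros y. apply Rmult_le_compat_l; auto. apply (proj1 Hg).
Qed.

Lemma deg_nonneg (x : W) : 0 <= deg q x.
Proof.
  assert (H := wsum_mono x (fun _ => 0) (fun _ => 1) (fun _ => Rle_0_1)).
  rewrite wsum_const, Rmult_0_l in H. exact H.
Qed.

Lemma lap_wsum (g : W -> R) (x : W) : lap q g x = wsum q x g - deg q x * g x.
Proof.
  change (lap q g x) with (wsum q x (fun y => g y - g x)).
  rewrite (wsum_ext x _ (fun y => 1 * g y + (- g x) * 1)) by (intros; ring).
  rewrite wsum_lin. unfold deg. ring.
Qed.

Lemma lap_qrestr (L : list W) (g : W -> R) (x : W) :
  lap (qrestr q L) g x = ind L x * lap q g x.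
Proof.
  change (lap q g x) with (wsum q x (fun y => g y - g x)).
  rewrite <- wsum_scal. unfold lap, wsum, qrestr.
  f_equal. apply functional_extensionality. intros y. ring.
Qed.

End LocallyFinite.

Lemma ind_in {W : Type} (L : list W) (x : W) : In x L -> ind L x = 1.
Proof. intros H. unfold ind. destruct (excluded_middle_informative (In x L)); tauto. Qed.

Lemma ind_out {W : Type} (L : list W) (x : W) : ~ In x L -> ind L x = 0.
Proof. intros H. unfold ind. destruct (excluded_middle_informative (In x L)); tauto. Qed.

Definition cutoff {W : Type} (L : list W) (g : W -> R) (y : W) : R := g y * ind L y.

Lemma cutoff_in {W : Type} (L : list W) (g : W -> R) (y : W) : In y L -> cutoff L g y = g y.
Proof. intros H. unfold cutoff. rewrite ind_in by exact H. ring. Qed.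

Lemma cutoff_out {W : Type} (L : list W) (g : W -> R) (y : W) : ~ In y L -> cutoff L g y = 0.
Proof. intros H. unfold cutoff. rewrite ind_out by exact H. ring. Qed.

Lemma cutoff_range {W : Type} (L : list W) (g : W -> R) (lo hi : R) :
  lo <= 0 <= hi -> (forall y, lo <= g y <= hi) -> forall y, lo <= cutoff L g y <= hi.
Proof.
  intros H0 Hrange y. destruct (classic (In y L)) as [I|I];
    [rewrite cutoff_in by exact I; apply Hrange | rewrite cutoff_out by exact I; lra].
Qed.

Lemma cutoff_bounded {W : Type} (L : list W) (g : W -> R) :
  bounded_fun g -> bounded_fun (cutoff L g).
Proof.
  intros [M HM]. exists M. intros y. destruct (classic (In y L)) as [I|I].
  - rewrite cutoff_in by exact I. apply HM.
  - rewrite cutoff_out, Rabs_R0 by exact I.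
    apply Rle_trans with (Rabs (g y)); [apply Rabs_pos | apply HM].
Qed.

(* For a constant [c] dominating the degrees on [L], the operator
   [Kshift = Δ_L + c 1_L] has nonnegative coefficients: on [L] it is
   [kbracket g x = Σ_y q(x,y) g(y) + (c - deg x) g(x)], and it vanishes off [L]. *)
Definition kbracket {W : Type} (q : W -> W -> R) (c : R) (g : W -> R) (x : W) : R :=
  wsum q x g + (c - deg q x) * g x.

Definition Kshift {W : Type} (q : W -> W -> R) (L : list W) (c : R) (g : W -> R) (x : W) : R :=
  ind L x * kbracket q c g x.

Definition Kpow {W : Type} (q : W -> W -> R) (L : list W) (c : R) (g : W -> R) (k : nat) : W -> R :=
  Nat.iter k (Kshift q L c) g.

Section ShiftedOperator.
Context {W : Type} (q : W -> W -> R) (Hg : is_graph q) (L : list W) (c : R).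

Lemma kbracket_affine (g h : W -> R) (N K : R) (x : W) :
  kbracket q c (fun y => g y + N * h y - K) x = kbracket q c g x + N * kbracket q c h x - K * c.
Proof.
  unfold kbracket.
  rewrite (wsum_ext q x _ (fun y => 1 * g y + 1 * (N * h y + (- K) * 1))) by (intros; ring).
  rewrite !(wsum_lin q Hg). unfold deg. ring.
Qed.

Lemma Kshift_in (g : W -> R) (x : W) : In x L -> Kshift q L c g x = kbracket q c g x.
Proof. intros H. unfold Kshift. rewrite ind_in by exact H. ring. Qed.

Lemma Kshift_out (g : W -> R) (x : W) : ~ In x L -> Kshift q L c g x = 0.
Proof. intros H. unfold Kshift. rewrite ind_out by exact H. ring. Qed.

Lemma lap_qrestr_Kshift (g : W -> R) (x : W) :
  lap (qrestr q L) g x = Kshift q L c g x - c * ind L x * g x.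
Proof. rewrite (lap_qrestr q Hg), (lap_wsum q Hg). unfold Kshift, kbracket. ring. Qed.

Lemma Kshift_lin (a b : R) (g h : W -> R) (x : W) :
  Kshift q L c (fun y => a * g y + b * h y) x = a * Kshift q L c g x + b * Kshift q L c h x.
Proof. unfold Kshift, kbracket. rewrite (wsum_lin q Hg). ring. Qed.

Lemma Kshift_ext (g h : W -> R) (x : W) :
  (forall y, g y = h y) -> Kshift q L c g x = Kshift q L c h x.
Proof. intros E. f_equal. apply functional_extensionality, E. Qed.

Lemma Kpow_lin (a b : R) (g h : W -> R) (k : nat) (x : W) :
  Kpow q L c (fun y => a * g y + b * h y) k x = a * Kpow q L c g k x + b * Kpow q L c h k x.
Proof.
  revert x. induction k as [|k IH]; intros x; [reflexivity|].
  change (Kshift q L c (Kpow q L c (fun y => a * g y + b * h y) k) x =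
          a * Kshift q L c (Kpow q L c g k) x + b * Kshift q L c (Kpow q L c h k) x).
  rewrite (Kshift_ext _ (fun y => a * Kpow q L c g k y + b * Kpow q L c h k y)) by exact IH.
  apply Kshift_lin.
Qed.

Lemma Kshift_sum (a : nat -> R) (F : nat -> W -> R) (n : nat) (x : W) :
  Kshift q L c (fun y => sum_f_R0 (fun j => a j * F j y) n) x
  = sum_f_R0 (fun j => a j * Kshift q L c (F j) x) n.
Proof.
  induction n as [|n IH]; simpl.
  - rewrite (Kshift_ext _ (fun y => a 0%nat * F 0%nat y + 0 * F 0%nat y)) by (intros; ring).
    rewrite Kshift_lin. ring.
  - rewrite (Kshift_ext _ (fun y => 1 * sum_f_R0 (fun j => a j * F j y) n + a (S n) * F (S n) y))
      by (intros; ring).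
    rewrite Kshift_lin, IH. ring.
Qed.

Lemma Kpow_cutoff_out (g : W -> R) (k : nat) (y : W) : ~ In y L -> Kpow q L c (cutoff L g) k y = 0.
Proof. intros H. destruct k; [apply cutoff_out, H | apply Kshift_out, H]. Qed.

Section Dominated.
Hypothesis Hdeg : forall y, In y L -> deg q y <= c.

Lemma Kshift_mono (g h : W -> R) (x : W) :
  (forall y, g y <= h y) -> Kshift q L c g x <= Kshift q L c h x.
Proof.
  intros Hgh. destruct (classic (In x L)) as [I|I].
  - rewrite !Kshift_in by exact I. unfold kbracket.
    apply Rplus_le_compat; [apply (wsum_mono q Hg); exact Hgh|].
    apply Rmult_le_compat_l; [specialize (Hdeg x I); lra | apply Hgh].
  - rewrite !Kshift_out by exact I. lra.
Qed.

Lemma Kpow_super (g : W -> R) (psi : nat -> W -> R) :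
  (forall k y, 0 <= psi k y) -> (forall y, g y <= psi 0%nat y) ->
  (forall k s, In s L -> kbracket q c (psi k) s <= psi (S k) s) ->
  forall k s, Kpow q L c g k s <= psi k s.
Proof.
  intros Hpos H0 Hstep k. induction k as [|k IH]; intros s; [apply H0|].
  apply Rle_trans with (Kshift q L c (psi k) s); [apply Kshift_mono, IH|].
  destruct (classic (In s L)) as [I|I].
  - rewrite Kshift_in by exact I. apply Hstep, I.
  - rewrite Kshift_out by exact I. apply Hpos.
Qed.

Lemma Kpow_sub (g : W -> R) (phi : nat -> W -> R) :
  (forall y, phi 0%nat y <= g y) -> (forall k s, ~ In s L -> phi (S k) s <= 0) ->
  (forall k s, In s L -> phi (S k) s <= kbracket q c (phi k) s) ->
  forall k s, phi k s <= Kpow q L c g k s.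
Proof.
  intros H0 Hout Hstep k. induction k as [|k IH]; intros s; [apply H0|].
  apply Rle_trans with (Kshift q L c (phi k) s); [|apply Kshift_mono, IH].
  destruct (classic (In s L)) as [I|I].
  - rewrite Kshift_in by exact I. apply Hstep, I.
  - rewrite Kshift_out by exact I. apply Hout, I.
Qed.

Hypothesis Hc : 0 <= c.

Lemma kbracket_const (K : R) (s : W) : kbracket q c (fun _ => K) s = K * c.
Proof. unfold kbracket. rewrite (wsum_const q Hg). ring. Qed.

Lemma Kpow_le_const (g : W -> R) (N : R) :
  0 <= N -> (forall y, g y <= N) -> forall k s, Kpow q L c g k s <= N * c ^ k.
Proof.
  intros HN Hgn. apply (Kpow_super g (fun k _ => N * c ^ k)).
  - intros k y. apply Rmult_le_pos; [exact HN | apply pow_le, Hc].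
  - intros y. simpl. rewrite Rmult_1_r. apply Hgn.
  - intros k s _. rewrite kbracket_const. simpl. lra.
Qed.

Lemma Kpow_ge_const (g : W -> R) (N : R) :
  0 <= N -> (forall y, - N <= g y) -> forall k s, - N * c ^ k <= Kpow q L c g k s.
Proof.
  intros HN Hgn. apply (Kpow_sub g (fun k _ => - N * c ^ k)).
  - intros y. simpl. rewrite Rmult_1_r. apply Hgn.
  - intros k s _. assert (0 <= N * c ^ S k) by (apply Rmult_le_pos; [exact HN | apply pow_le, Hc]).
    lra.
  - intros k s _. rewrite kbracket_const. simpl. lra.
Qed.

Lemma Kpow_nonneg (g : W -> R) : (forall y, 0 <= g y) -> forall k s, 0 <= Kpow q L c g k s.
Proof.
  intros H k s.
  assert (B := Kpow_ge_const g 0 (Rle_refl 0) ltac:(intros y; rewrite Ropp_0; apply H) k s).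
  lra.
Qed.

Lemma Kpow_abs (g : W -> R) (B : R) :
  (forall y, Rabs (g y) <= B) -> forall k s, Rabs (Kpow q L c g k s) <= B * c ^ k.
Proof.
  intros HB k s.
  assert (B0 : 0 <= B) by (apply Rle_trans with (Rabs (g s)); [apply Rabs_pos | apply HB]).
  apply Rabs_le. split.
  - rewrite Ropp_mult_distr_l. apply Kpow_ge_const; auto.
    intros y. specialize (HB y). apply Rabs_le_between in HB. lra.
  - apply Kpow_le_const; auto. intros y. specialize (HB y). apply Rabs_le_between in HB. lra.
Qed.

End Dominated.
End ShiftedOperator.

Lemma binom_n0 (n : nat) : Binomial.C n 0 = 1.
Proof. unfold Binomial.C. rewrite Nat.sub_0_r. simpl. field. apply INR_fact_neq_0. Qed.

Lemma binom_nn (n : nat) : Binomial.C n n = 1.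
Proof. unfold Binomial.C. rewrite Nat.sub_diag. simpl. field. apply INR_fact_neq_0. Qed.

Lemma sum_f_R0_scal (F : nat -> R) (a : R) (n : nat) :
  sum_f_R0 (fun i => a * F i) n = a * sum_f_R0 F n.
Proof. induction n as [|n IH]; simpl; [|rewrite IH]; ring. Qed.

(* Pascal's rule in the form of one step of the binomial theorem
   [(X + y)^(k+1) = X (X + y)^k + y (X + y)^k], with [X^j] acting as [u j]. *)
Lemma pascal_sum (u : nat -> R) (y : R) (k : nat) :
  sum_f_R0 (fun j => Binomial.C k j * y ^ (k - j) * u (S j)) k
  + y * sum_f_R0 (fun j => Binomial.C k j * y ^ (k - j) * u j) k
  = sum_f_R0 (fun j => Binomial.C (S k) j * y ^ (S k - j) * u j) (S k).
Proof.
  rewrite (decomp_sum _ (S k)) by lia. simpl pred.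
  destruct k as [|m].
  - simpl. rewrite !binom_n0, binom_nn. ring.
  - rewrite (decomp_sum (fun j => Binomial.C (S m) j * y ^ (S m - j) * u j)) by lia. simpl pred.
    rewrite tech5, (tech5 (fun i => Binomial.C (S (S m)) (S i) * y ^ (S (S m) - S i) * u (S i))).
    rewrite !binom_n0, !binom_nn.
    replace (sum_f_R0 (fun i => Binomial.C (S (S m)) (S i) * y ^ (S (S m) - S i) * u (S i)) m)
      with (sum_f_R0 (fun i => Binomial.C (S m) i * y ^ (S m - i) * u (S i)) m +
            sum_f_R0 (fun i => y * (Binomial.C (S m) (S i) * y ^ (S m - S i) * u (S i))) m).
    2:{ rewrite <- plus_sum. apply sum_eq. intros i Hi.
        rewrite <- (pascal (S m) i) by lia.
        replace (S (S m) - S i)%nat with (S m - i)%nat by lia.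
        replace (S m - i)%nat with (S (S m - S i)) by lia. simpl. ring. }
    rewrite sum_f_R0_scal, !Nat.sub_diag, !Nat.sub_0_r. simpl. ring.
Qed.

Section BinomialExpansion.
Context {W : Type} (q : W -> W -> R) (Hg : is_graph q) (L : list W) (c : R)
  (h : W -> R) (Hsupp : forall x, ~ In x L -> h x = 0).

Lemma iter_lapL_support (k : nat) (x : W) :
  ~ In x L -> Nat.iter k (lap (qrestr q L)) h x = 0.
Proof.
  intros H. destruct k as [|k]; [apply Hsupp, H|].
  simpl. rewrite (lap_qrestr q Hg), ind_out by exact H. ring.
Qed.

(* Since [Δ_L = Kshift - c] on functions supported in [L], the binomial theorem
   gives [Δ_L^k h = Σ_j C(k,j) (-c)^(k-j) Kshift^j h]. *)
Lemma iter_lapL_binomial (k : nat) (x : W) :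
  Nat.iter k (lap (qrestr q L)) h x
  = sum_f_R0 (fun j => Binomial.C k j * (- c) ^ (k - j) * Kpow q L c h j x) k.
Proof.
  revert x. induction k as [|k IH]; intros x.
  - simpl. rewrite binom_n0. ring.
  - change (lap (qrestr q L) (Nat.iter k (lap (qrestr q L)) h) x
      = sum_f_R0 (fun j => Binomial.C (S k) j * (- c) ^ (S k - j) * Kpow q L c h j x) (S k)).
    rewrite (lap_qrestr_Kshift q Hg L c).
    assert (Hcut : ind L x * Nat.iter k (lap (qrestr q L)) h x = Nat.iter k (lap (qrestr q L)) h x).
    { destruct (classic (In x L)) as [I|I];
        [rewrite ind_in by exact I | rewrite ind_out, iter_lapL_support by exact I]; ring. }
    rewrite Rmult_assoc, Hcut.
    rewrite (Kshift_ext q L c _ (fun y => sum_f_R0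
       (fun j => Binomial.C k j * (- c) ^ (k - j) * Kpow q L c h j y) k)) by exact IH.
    rewrite (Kshift_sum q Hg L c (fun j => Binomial.C k j * (- c) ^ (k - j)) (fun j => Kpow q L c h j)).
    rewrite IH, <- (pascal_sum (fun j => Kpow q L c h j x) (- c) k).
    rewrite (sum_eq (fun j => Binomial.C k j * (- c) ^ (k - j) * Kshift q L c (Kpow q L c h j) x)
               (fun j => Binomial.C k j * (- c) ^ (k - j) * Kpow q L c h (S j) x) k
               (fun _ _ => eq_refl)).
    ring.
Qed.

End BinomialExpansion.

Lemma exp_series (x : R) : is_series (fun n => x ^ n / INR (fact n)) (exp x).
Proof.
  generalize (is_exp_Reals x). unfold is_pseries. apply is_series_ext.
  intros n. rewrite pow_n_pow. unfold scal; simpl. unfold mult; simpl. unfold Rdiv. ring.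
Qed.

Lemma series_le (a b : nat -> R) (A B : R) :
  is_series a A -> is_series b B -> (forall n, a n <= b n) -> A <= B.
Proof.
  intros Ha Hb Hab. apply is_series_Reals in Ha. apply is_series_Reals in Hb.
  apply (Rle_cv_lim (fun n => sum_Rle a b n (fun i _ => Hab i)) Ha Hb).
Qed.

Lemma is_series_lin (a b : nat -> R) (A B r : R) :
  is_series a A -> is_series b B -> is_series (fun n => a n + r * b n) (A + r * B).
Proof.
  intros Ha Hb. apply (@is_series_plus R_AbsRing R_NormedModule); [exact Ha|].
  apply (@is_series_scal_l R_AbsRing R_NormedModule), Hb.
Qed.

Lemma exp_series_scal (N x : R) : is_series (fun n => N * (x ^ n / INR (fact n))) (N * exp x).
Proof. apply (@is_series_scal_l R_AbsRing R_NormedModule), exp_series. Qed.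

Definition heat_term {W : Type} (q : W -> W -> R) (L : list W) (c t : R) (g : W -> R) (x : W)
  (n : nat) : R := t ^ n * Kpow q L c g n x / INR (fact n).

Lemma exp_term_mono (t K1 K2 : R) (n : nat) :
  0 <= t -> K1 <= K2 -> t ^ n * K1 / INR (fact n) <= t ^ n * K2 / INR (fact n).
Proof.
  intros Ht HK. unfold Rdiv.
  apply Rmult_le_compat_r; [apply Rlt_le, Rinv_0_lt_compat, INR_fact_lt_0|].
  apply Rmult_le_compat_l; [apply pow_le, Ht | exact HK].
Qed.

Lemma exp_term_le_exp (t c K N : R) (n : nat) :
  0 <= t -> K <= N * c ^ n -> t ^ n * K / INR (fact n) <= N * ((c * t) ^ n / INR (fact n)).
Proof.
  intros Ht HK. replace (N * ((c * t) ^ n / INR (fact n))) with (t ^ n * (N * c ^ n) / INR (fact n))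
    by (rewrite Rpow_mult_distr; unfold Rdiv; ring).
  apply exp_term_mono; assumption.
Qed.

Section ExponentialRepresentation.
Context {W : Type} (q : W -> W -> R) (Hg : is_graph q) (L : list W) (c t : R)
  (Hdeg : forall y, In y L -> deg q y <= c) (Hc : 0 <= c) (Ht : 0 <= t).

(* The series defining [P^L_t] is the Cauchy product of the series of
   [exp (t Kshift)] and of [exp (- c t)]. *)
Lemma PS_term_cauchy (f : W -> R) (x : W) (k : nat) :
  PS_term q L t f x k
  = sum_f_R0 (fun j => heat_term q L c t (cutoff L f) x j
                       * ((- c * t) ^ (k - j) / INR (fact (k - j)))) k.
Proof.
  unfold PS_term. fold (cutoff L f).
  rewrite (iter_lapL_binomial q Hg L c (cutoff L f) (cutoff_out L f)).
  replace (t ^ k * sum_f_R0 (fun j => Binomial.C k j * (- c) ^ (k - j)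
             * Kpow q L c (cutoff L f) j x) k / INR (fact k))
    with ((t ^ k / INR (fact k)) * sum_f_R0 (fun j => Binomial.C k j * (- c) ^ (k - j)
             * Kpow q L c (cutoff L f) j x) k) by (field; apply INR_fact_neq_0).
  rewrite <- sum_f_R0_scal. apply sum_eq. intros j Hj.
  unfold heat_term, Binomial.C. rewrite Rpow_mult_distr.
  replace (t ^ k) with (t ^ j * t ^ (k - j)) by (rewrite <- pow_add; f_equal; lia).
  field. repeat split; apply INR_fact_neq_0.
Qed.

(* Since [|Kshift^n g| <= B c^n], the terms are dominated by [B (ct)^n / n!]. *)
Lemma heat_term_abs_summable (g : W -> R) (x : W) :
  bounded_fun g -> ex_series (fun n => Rabs (heat_term q L c t g x n)).
Proof.
  intros [B HB].
  apply (@ex_series_le R_AbsRing R_CompleteNormedModule _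
           (fun n => B * ((c * t) ^ n / INR (fact n)))).
  - intros n. change (norm (Rabs (heat_term q L c t g x n))) with (Rabs (Rabs (heat_term q L c t g x n))).
    rewrite Rabs_Rabsolu. unfold heat_term, Rdiv.
    rewrite !Rabs_mult, (Rabs_pos_eq (/ _)) by (apply Rlt_le, Rinv_0_lt_compat, INR_fact_lt_0).
    rewrite <- RPow_abs, (Rabs_pos_eq t) by exact Ht.
    apply exp_term_le_exp; [exact Ht | apply (Kpow_abs q Hg L c Hdeg Hc g B HB)].
  - exists (scal B (exp (c * t))). apply (is_series_scal_l B _ _ (exp_series (c * t))).
Qed.

Lemma PS_product (f : W -> R) (x : W) :
  bounded_fun f -> PS q L t f x = Series (heat_term q L c t (cutoff L f) x) * exp (- c * t).
Proof.
  intros Hf.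
  assert (Habs := heat_term_abs_summable (cutoff L f) x (cutoff_bounded L f Hf)).
  assert (HS := Series_correct _ (ex_series_Rabs _ Habs)).
  assert (Hexp : ex_series (fun n => Rabs ((- c * t) ^ n / INR (fact n)))).
  { exists (exp (c * t)). generalize (exp_series (c * t)). apply is_series_ext.
    intros n. unfold Rdiv. rewrite Rabs_mult, <- RPow_abs,
      (Rabs_pos_eq (/ _)) by (apply Rlt_le, Rinv_0_lt_compat, INR_fact_lt_0).
    rewrite Rabs_left1 by nra. f_equal. f_equal. ring. }
  assert (Hprod := is_series_mult _ _ _ _ HS (exp_series (- c * t)) Habs Hexp).
  apply is_series_Reals in Hprod.
  assert (Hcv : Un_cv (fun N => sum_f_R0 (PS_term q L t f x) N)
                  (Series (heat_term q L c t (cutoff L f) x) * exp (- c * t))).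
  { intros e He. destruct (Hprod e He) as [N HN]. exists N. intros n Hn.
    rewrite (sum_eq _ _ n (fun k _ => PS_term_cauchy f x k)). apply HN, Hn. }
  unfold PS. destruct (excluded_middle_informative _) as [H|H].
  - destruct (constructive_indefinite_description _ H) as [l Hl]; simpl.
    exact (UL_sequence _ _ _ Hl Hcv).
  - exfalso. apply H. eauto.
Qed.

(* Exponential representation: [e^(ct) P^L_t f = Σ_n t^n Kshift^n (f 1_L) / n!].
   All terms of the right-hand side are monotone in [f]: this is the source of
   every comparison below. *)
Lemma PS_exp_series (f : W -> R) (x : W) :
  bounded_fun f -> is_series (heat_term q L c t (cutoff L f) x) (exp (c * t) * PS q L t f x).
Proof.
  intros Hf. rewrite (PS_product f x Hf).
  replace (exp (c * t) * (Series (heat_term q L c t (cutoff L f) x) * exp (- c * t)))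
    with (Series (heat_term q L c t (cutoff L f) x) * exp (c * t + - c * t)) by (rewrite exp_plus; ring).
  replace (c * t + - c * t) with 0 by ring. rewrite exp_0, Rmult_1_r.
  apply Series_correct, ex_series_Rabs, heat_term_abs_summable, cutoff_bounded, Hf.
Qed.

End ExponentialRepresentation.

Definition cdeg {W : Type} (q : W -> W -> R) (L : list W) : R := lsum L (deg q).

Lemma cdeg_nonneg {W : Type} (q : W -> W -> R) (Hg : is_graph q) (L : list W) : 0 <= cdeg q L.
Proof.
  unfold cdeg. induction L as [|y L IH]; unfold lsum in *; simpl; [lra|].
  generalize (deg_nonneg q Hg y). lra.
Qed.

Lemma cdeg_ge {W : Type} (q : W -> W -> R) (Hg : is_graph q) (L : list W) (y : W) :
  In y L -> deg q y <= cdeg q L.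
Proof.
  unfold cdeg. induction L as [|z L IH]; [intros []|].
  change (lsum (z :: L) (deg q)) with (deg q z + lsum L (deg q)). intros [<-|I].
  - generalize (cdeg_nonneg q Hg L). unfold cdeg. lra.
  - generalize (IH I) (deg_nonneg q Hg z). lra.
Qed.

Lemma PS_compare {W1 W2 : Type} (q1 : W1 -> W1 -> R) (q2 : W2 -> W2 -> R)
  (Hg1 : is_graph q1) (Hg2 : is_graph q2) (L1 : list W1) (L2 : list W2) (c t : R)
  (g1 : W1 -> R) (g2 : W2 -> R) (x1 : W1) (x2 : W2) :
  0 <= c -> 0 <= t ->
  (forall y, In y L1 -> deg q1 y <= c) -> (forall y, In y L2 -> deg q2 y <= c) ->
  bounded_fun g1 -> bounded_fun g2 ->
  (forall n, Kpow q1 L1 c (cutoff L1 g1) n x1 <= Kpow q2 L2 c (cutoff L2 g2) n x2) ->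
  PS q1 L1 t g1 x1 <= PS q2 L2 t g2 x2.
Proof.
  intros Hc Ht H1 H2 B1 B2 HK. apply Rmult_le_reg_l with (exp (c * t)); [apply exp_pos|].
  apply (series_le _ _ _ _ (PS_exp_series q1 Hg1 L1 c t H1 Hc Ht g1 x1 B1)
                           (PS_exp_series q2 Hg2 L2 c t H2 Hc Ht g2 x2 B2)).
  intros n. apply exp_term_mono; auto.
Qed.

Lemma exhaustion_mono {W : Type} (S : nat -> list W) :
  exhaustion S -> forall i j, (i <= j)%nat -> incl (S i) (S j).
Proof.
  intros [Hstep _] i j Hij. induction Hij; [apply incl_refl|].
  eapply incl_tran; [exact IHHij|]. intros x Hx. apply Hstep, Hx.
Qed.

Lemma exhaustion_cover {W : Type} (S : nat -> list W) :
  exhaustion S -> forall l : list W, exists i, incl l (S i).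
Proof.
  intros HS l. induction l as [|a l [i Hi]]; [exists 0%nat; intros x []|].
  destruct (proj2 HS a) as [j Hj]. exists (Nat.max i j). intros x [<-|Hx].
  - apply (exhaustion_mono S HS j); [lia | exact Hj].
  - apply (exhaustion_mono S HS i); [lia | apply Hi, Hx].
Qed.

Section TruncatedSemigroup.
Context {W : Type} (q : W -> W -> R) (Hg : is_graph q) (t : R) (Ht : 0 <= t).

Lemma PS_lin (L : list W) (g h : W -> R) (a : R) (x : W) :
  bounded_fun g -> bounded_fun h ->
  PS q L t (fun y => g y + a * h y) x = PS q L t g x + a * PS q L t h x.
Proof.
  intros Bg Bh. set (c := cdeg q L).
  assert (Hc : 0 <= c) by apply (cdeg_nonneg q Hg).
  assert (Hdeg : forall y, In y L -> deg q y <= c) by (intros; apply (cdeg_ge q Hg); auto).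
  assert (Bgh : bounded_fun (fun y => g y + a * h y)).
  { destruct Bg as [Mg Hmg], Bh as [Mh Hmh]. exists (Mg + Rabs a * Mh). intros y.
    eapply Rle_trans; [apply Rabs_triang|]. rewrite Rabs_mult.
    apply Rplus_le_compat; auto. apply Rmult_le_compat_l; auto. apply Rabs_pos. }
  assert (Hsum := is_series_lin _ _ _ _ a (PS_exp_series q Hg L c t Hdeg Hc Ht g x Bg)
                                          (PS_exp_series q Hg L c t Hdeg Hc Ht h x Bh)).
  assert (Hlin : is_series (heat_term q L c t (cutoff L (fun y => g y + a * h y)) x)
                   (exp (c * t) * PS q L t g x + a * (exp (c * t) * PS q L t h x))).
  { assert (Hcut : cutoff L (fun y => g y + a * h y)
                   = (fun y => 1 * cutoff L g y + a * cutoff L h y)).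
    { apply functional_extensionality. intros y. unfold cutoff. ring. }
    revert Hsum. apply is_series_ext. intros n; simpl. unfold heat_term.
    rewrite Hcut, (Kpow_lin q Hg). unfold Rdiv. ring. }
  apply Rmult_eq_reg_l with (exp (c * t)); [|apply Rgt_not_eq, exp_pos].
  rewrite <- (is_series_unique _ _ (PS_exp_series q Hg L c t Hdeg Hc Ht _ x Bgh)),
          (is_series_unique _ _ Hlin). ring.
Qed.

Lemma PS_shift (L : list W) (F : W -> R) (M : R) (x : W) :
  (forall y, Rabs (F y) <= M) ->
  PS q L t F x = PS q L t (fun y => F y + M) x - M * PS q L t (fun _ => 1) x.
Proof.
  intros HM. unfold Rminus. rewrite Ropp_mult_distr_l, <- PS_lin.
  - f_equal. apply functional_extensionality. intros y. ring.
  - exists (Rabs M + M). intros y. eapply Rle_trans; [apply Rabs_triang|]. generalize (HM y). lra.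
  - exists 1. intros y. rewrite Rabs_R1. lra.
Qed.

Lemma PS_bounds (L : list W) (g : W -> R) (N : R) (x : W) :
  0 <= N -> (forall y, 0 <= g y <= N) -> 0 <= PS q L t g x <= N.
Proof.
  intros HN Hgn. set (c := cdeg q L).
  assert (Hc : 0 <= c) by apply (cdeg_nonneg q Hg).
  assert (Hdeg : forall y, In y L -> deg q y <= c) by (intros; apply (cdeg_ge q Hg); auto).
  assert (Hcut := cutoff_range L g 0 N ltac:(lra) Hgn).
  assert (Bg : bounded_fun g).
  { exists N. intros y. specialize (Hgn y). rewrite Rabs_pos_eq; lra. }
  assert (HS := PS_exp_series q Hg L c t Hdeg Hc Ht g x Bg).
  assert (He : 0 < exp (c * t)) by apply exp_pos.
  split.
  - apply Rmult_le_reg_l with (exp (c * t)); [exact He|]. rewrite Rmult_0_r.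
    replace 0 with (0 * exp (c * t)) by ring.
    apply (series_le _ _ _ _ (exp_series_scal 0 (c * t)) HS). intros n.
    replace (0 * ((c * t) ^ n / INR (fact n))) with (t ^ n * 0 / INR (fact n)) by (unfold Rdiv; ring).
    apply exp_term_mono; [exact Ht|]. apply (Kpow_nonneg q Hg L c Hdeg Hc). intros; apply Hcut.
  - apply Rmult_le_reg_l with (exp (c * t)); [exact He|]. rewrite (Rmult_comm _ N).
    apply (series_le _ _ _ _ HS (exp_series_scal N (c * t))). intros n.
    apply exp_term_le_exp; [exact Ht|].
    apply (Kpow_le_const q Hg L c Hdeg Hc (cutoff L g) N HN). intros y. apply Hcut.
Qed.

Lemma PS_mono (L L' : list W) (g : W -> R) (x : W) :
  incl L L' -> bounded_fun g -> (forall y, 0 <= g y) -> PS q L t g x <= PS q L' t g x.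
Proof.
  intros HLL' Bg Hg0. set (c := cdeg q L').
  assert (Hc : 0 <= c) by apply (cdeg_nonneg q Hg).
  assert (Hdeg' : forall y, In y L' -> deg q y <= c) by (intros; apply (cdeg_ge q Hg); auto).
  assert (Hdeg : forall y, In y L -> deg q y <= c) by auto.
  assert (Hcut0 : forall (L0 : list W) y, 0 <= cutoff L0 g y).
  { intros L0 y. unfold cutoff. destruct (classic (In y L0)) as [I|I];
      [rewrite ind_in | rewrite ind_out]; auto; generalize (Hg0 y); lra. }
  apply (PS_compare q q Hg Hg L L' c t g g x x Hc Ht Hdeg Hdeg' Bg Bg).
  intros n. revert x. apply (Kpow_super q Hg L c Hdeg).
  - intros k y. apply (Kpow_nonneg q Hg L' c Hdeg' Hc), Hcut0.
  - intros y. destruct (classic (In y L)) as [I|I].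
    + change (cutoff L g y <= cutoff L' g y).
      rewrite (cutoff_in L), (cutoff_in L') by (try apply HLL'; exact I). lra.
    + rewrite cutoff_out by exact I. apply Hcut0.
  - intros k s Hs. apply Req_le. symmetry. apply (Kshift_in q L' c), HLL', Hs.
Qed.

Definition is_PS_sup (g : W -> R) (x : W) (l : R) : Prop :=
  (forall L, PS q L t g x <= l) /\ (forall e, 0 < e -> exists L, l - e < PS q L t g x).

(* It exists for bounded nonnegative [g], by the sub-Markov property. *)
Lemma PS_sup_exists (g : W -> R) (N : R) (x : W) :
  0 <= N -> (forall y, 0 <= g y <= N) -> exists l, is_PS_sup g x l.
Proof.
  intros HN Hgn.
  destruct (completeness (fun r => exists L, r = PS q L t g x)) as [m [Hub Hleast]].
  - exists N. intros r [L ->]. apply (PS_bounds L g N x HN Hgn).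
  - exists (PS q [] t g x). eauto.
  - exists m. split.
    + intros L. apply Hub. eauto.
    + intros e He. apply not_all_not_ex. intros Hnone.
      assert (m <= m - e); [|lra].
      apply Hleast. intros r [L ->]. specialize (Hnone L). lra.
Qed.

Lemma PS_sup_limit (S : nat -> list W) (g : W -> R) (N : R) (x : W) (l : R) :
  exhaustion S -> 0 <= N -> (forall y, 0 <= g y <= N) -> is_PS_sup g x l ->
  Un_cv (fun i => PS q (S i) t g x) l.
Proof.
  intros HS HN Hgn [Hub Happrox] e He. destruct (Happrox e He) as [L0 HL0].
  destruct (exhaustion_cover S HS L0) as [i0 Hi0]. exists i0. intros n Hn.
  assert (PS q L0 t g x <= PS q (S n) t g x).
  { apply PS_mono.
    - eapply incl_tran; [exact Hi0 | apply exhaustion_mono; auto].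
    - exists N. intros y. specialize (Hgn y). rewrite Rabs_pos_eq; lra.
    - intros y. apply Hgn. }
  specialize (Hub (S n)). unfold Rdist. rewrite Rabs_left1; lra.
Qed.

Lemma Pt_char (f : W -> R) (x : W) (l : R) : (exists S : nat -> list W, exhaustion S) ->
  (forall S, exhaustion S -> Un_cv (fun i => PS q (S i) t f x) l) -> Pt q t f x = l.
Proof.
  intros [S0 HS0] H. unfold Pt. destruct (excluded_middle_informative _) as [H'|H'].
  - destruct (constructive_indefinite_description _ H') as [l' Hl']; simpl.
    exact (UL_sequence _ _ _ (Hl' S0 HS0) (H S0 HS0)).
  - exfalso. apply H'. eauto.
Qed.

Lemma Pt_split (F : W -> R) (M : R) (x : W) (a b : R) :
  (exists S : nat -> list W, exhaustion S) -> (forall y, Rabs (F y) <= M) ->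
  (forall S, exhaustion S -> Un_cv (fun i => PS q (S i) t (fun y => F y + M) x) a) ->
  (forall S, exhaustion S -> Un_cv (fun i => PS q (S i) t (fun _ => 1) x) b) ->
  Pt q t F x = a - M * b.
Proof.
  intros Hex HM Ha Hb. apply Pt_char; [exact Hex|]. intros S HS.
  rewrite (functional_extensionality (fun i => PS q (S i) t F x)
    (fun i => PS q (S i) t (fun y => F y + M) x + (- M) * PS q (S i) t (fun _ => 1) x))
    by (intros i; rewrite (PS_shift (S i) F M x HM); ring).
  replace (a - M * b) with (a + (- M) * b) by ring.
  apply CV_plus; [apply Ha, HS|]. apply CV_mult; [|apply Hb, HS].
  intros e He. exists 0%nat. intros. unfold Rdist. rewrite Rminus_diag, Rabs_R0. exact He.
Qed.

Lemma stoch_complete_approx : stoch_complete q -> (exists S : nat -> list W, exhaustion S) ->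
  forall x e, 0 < e -> exists L, 1 - e < PS q L t (fun _ => 1) x.
Proof.
  intros Hsc Hex x e He.
  assert (H01 : forall y : W, 0 <= (fun _ => 1) y <= 1) by (intros; lra).
  destruct (PS_sup_exists (fun _ => 1) 1 x Rle_0_1 H01) as [l Hl].
  assert (E : Pt q t (fun _ => 1) x = l).
  { apply Pt_char; [exact Hex|]. intros S HS. apply (PS_sup_limit S _ 1); auto. lra. }
  rewrite (Hsc t Ht) in E. subst l. apply (proj2 Hl), He.
Qed.

End TruncatedSemigroup.

Definition intertwines {V W : Type} (qt : W -> W -> R) (q : V -> V -> R) (pi : W -> V) : Prop :=
  forall h s, lap qt (fun p => h (pi p)) s = lap q h (pi s).

Section Coupling.
Context {V W : Type} (q : V -> V -> R) (Hg : is_graph q) (qt : W -> W -> R) (Hgt : is_graph qt)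
  (t : R) (Ht : 0 <= t).

(* The bracket [kbracket] only involves the Laplacian and the constant [c],
   hence it is transported by intertwining maps. *)
Lemma kbracket_transfer (pi : W -> V) (Hpi : intertwines qt q pi) (c : R) (h : V -> R) (s : W) :
  kbracket qt c (fun p => h (pi p)) s = kbracket q c h (pi s).
Proof.
  generalize (Hpi h s). rewrite (lap_wsum qt Hgt), (lap_wsum q Hg). unfold kbracket. lra.
Qed.

Lemma PS_upper (pi : W -> V) (Hpi : intertwines qt q pi) (g : V -> R) (N : R) (Lt : list W) (s : W) :
  0 <= N -> (forall y, 0 <= g y <= N) ->
  PS qt Lt t (fun p => g (pi p)) s <= PS q (map pi Lt) t g (pi s).
Proof.
  intros HN Hgn. set (T := map pi Lt). set (c := cdeg qt Lt + cdeg q T).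
  assert (Ht1 := cdeg_nonneg qt Hgt Lt). assert (Ht2 := cdeg_nonneg q Hg T).
  assert (Hc : 0 <= c) by (unfold c; lra).
  assert (Hdt : forall y, In y Lt -> deg qt y <= c).
  { intros y Hy. generalize (cdeg_ge qt Hgt Lt y Hy). unfold c. lra. }
  assert (Hd : forall y, In y T -> deg q y <= c).
  { intros y Hy. generalize (cdeg_ge q Hg T y Hy). unfold c. lra. }
  assert (Bg : bounded_fun g) by (exists N; intros y; specialize (Hgn y); rewrite Rabs_pos_eq; lra).
  assert (Bgpi : bounded_fun (fun p => g (pi p))) by (destruct Bg as [M HM]; exists M; auto).
  apply (PS_compare qt q Hgt Hg Lt T c t _ g s (pi s) Hc Ht Hdt Hd Bgpi Bg).
  intros n. revert s.
  apply (Kpow_super qt Hgt Lt c Hdt _ (fun k p => Kpow q T c (cutoff T g) k (pi p))).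
  - intros k y. apply (Kpow_nonneg q Hg T c Hd Hc). intros z. apply (cutoff_range T g 0 N); auto; lra.
  - intros y. change (cutoff Lt (fun p => g (pi p)) y <= cutoff T g (pi y)).
    destruct (classic (In y Lt)) as [I|I].
    + rewrite cutoff_in, cutoff_in by (try apply in_map; exact I). lra.
    + rewrite cutoff_out by exact I. apply (cutoff_range T g 0 N); auto; lra.
  - intros k p Hp. rewrite (kbracket_transfer pi Hpi), <- (Kshift_in q T c) by (apply in_map, Hp).
    apply Rle_refl.
Qed.

Section Rectangle.
Variables (pi1 pi2 : W -> V) (Hpi1 : intertwines qt q pi1) (Hpi2 : intertwines qt q pi2).
Variables (T' T : list V) (Rt : list W).
Hypothesis HR : forall s, In s Rt <-> In (pi1 s) T' /\ In (pi2 s) T.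

(* Lower bound on the "rectangle" [Rt = pi1^-1 T' ∩ pi2^-1 T]: with
   [a_k = Kshift_T^k (g 1_T)] and [b_k = Kshift_T'^k 1_T'], the function
   [a_k ∘ pi2 + N b_k ∘ pi1 - N c^k] is a subsolution for [Kshift_Rt]. *)
Lemma Kpow_rectangle_lower (c : R) (g : V -> R) (N : R) :
  0 <= c -> 0 <= N -> (forall y, 0 <= g y <= N) ->
  (forall y, In y Rt -> deg qt y <= c) -> (forall y, In y T -> deg q y <= c) ->
  (forall y, In y T' -> deg q y <= c) ->
  forall k p,
    Kpow q T c (cutoff T g) k (pi2 p) + N * Kpow q T' c (cutoff T' (fun _ => 1)) k (pi1 p) - N * c ^ k
    <= Kpow qt Rt c (cutoff Rt (fun p => g (pi2 p))) k p.
Proof.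
  intros Hc HN Hgn Hdt Hd Hd'.
  set (a := fun k => Kpow q T c (cutoff T g) k).
  set (b := fun k => Kpow q T' c (cutoff T' (fun _ => 1)) k).
  assert (Ha : forall k y, a k y <= N * c ^ k).
  { intros k y. apply (Kpow_le_const q Hg T c Hd Hc _ N HN). intros z.
    apply (cutoff_range T g 0 N); auto; lra. }
  assert (Hb : forall k y, 0 <= b k y <= 1 * c ^ k).
  { intros k y. split.
    - apply (Kpow_nonneg q Hg T' c Hd' Hc). intros z. apply (cutoff_range T' _ 0 1); intros; lra.
    - apply (Kpow_le_const q Hg T' c Hd' Hc _ 1 Rle_0_1). intros z.
      apply (cutoff_range T' _ 0 1); intros; lra. }
  set (phi := fun k p => a k (pi2 p) + N * b k (pi1 p) - N * c ^ k).
  assert (Hout : forall k p, ~ In p Rt -> phi k p <= 0).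
  { intros k p Hp. unfold phi. destruct (classic (In (pi2 p) T)) as [I2|I2].
    - assert (I1 : ~ In (pi1 p) T') by (intros I1; apply Hp, HR; auto).
      unfold b. rewrite (Kpow_cutoff_out q T') by exact I1. specialize (Ha k (pi2 p)). lra.
    - unfold a. rewrite (Kpow_cutoff_out q T) by exact I2.
      assert (N * b k (pi1 p) <= N * (1 * c ^ k)) by (apply Rmult_le_compat_l; [lra | apply Hb]).
      lra. }
  apply (Kpow_sub qt Hgt Rt c Hdt _ phi).
  - intros y. destruct (classic (In y Rt)) as [I|I].
    + destruct (proj1 (HR y) I) as [I1 I2]. unfold phi, a, b. simpl.
      rewrite !cutoff_in by assumption. lra.
    + rewrite cutoff_out by exact I. apply Hout, I.
  - intros k p Hp. apply Hout, Hp.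
  - intros k p Hp. destruct (proj1 (HR p) Hp) as [I1 I2]. apply Req_le.
    unfold phi. rewrite (kbracket_affine qt Hgt c), (kbracket_transfer pi2 Hpi2),
      (kbracket_transfer pi1 Hpi1).
    rewrite <- (Kshift_in q T c) by exact I2. rewrite <- (Kshift_in q T' c) by exact I1.
    unfold phi, a, b. simpl. ring.
Qed.

Lemma PS_rectangle_lower (g : V -> R) (N : R) (s : W) :
  0 <= N -> (forall y, 0 <= g y <= N) ->
  PS q T t g (pi2 s) - N + N * PS q T' t (fun _ => 1) (pi1 s)
  <= PS qt Rt t (fun p => g (pi2 p)) s.
Proof.
  intros HN Hgn. set (c := cdeg qt Rt + cdeg q T + cdeg q T').
  assert (C1 := cdeg_nonneg qt Hgt Rt). assert (C2 := cdeg_nonneg q Hg T).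
  assert (C3 := cdeg_nonneg q Hg T').
  assert (Hc : 0 <= c) by (unfold c; lra).
  assert (Hdt : forall y, In y Rt -> deg qt y <= c).
  { intros y Hy. generalize (cdeg_ge qt Hgt Rt y Hy). unfold c. lra. }
  assert (Hd : forall y, In y T -> deg q y <= c).
  { intros y Hy. generalize (cdeg_ge q Hg T y Hy). unfold c. lra. }
  assert (Hd' : forall y, In y T' -> deg q y <= c).
  { intros y Hy. generalize (cdeg_ge q Hg T' y Hy). unfold c. lra. }
  assert (Bg : bounded_fun g) by (exists N; intros y; specialize (Hgn y); rewrite Rabs_pos_eq; lra).
  assert (Bgpi : bounded_fun (fun p => g (pi2 p))) by (destruct Bg as [M HM]; exists M; auto).
  assert (B1 : bounded_fun (fun _ : V => 1)) by (exists 1; intros; rewrite Rabs_R1; lra).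
  assert (Hlow := is_series_lin _ _ _ _ N
    (is_series_lin _ _ _ _ (- N) (PS_exp_series q Hg T c t Hd Hc Ht g (pi2 s) Bg) (exp_series (c * t)))
    (PS_exp_series q Hg T' c t Hd' Hc Ht _ (pi1 s) B1)).
  assert (Hhigh := PS_exp_series qt Hgt Rt c t Hdt Hc Ht _ s Bgpi).
  apply Rmult_le_reg_l with (exp (c * t)); [apply exp_pos|].
  eapply Rle_trans; [|apply (series_le _ _ _ _ Hlow Hhigh)]; [apply Req_le; ring|].
  intros n. unfold heat_term.
  match goal with |- ?X <= _ => replace X with (t ^ n * (Kpow q T c (cutoff T g) n (pi2 s)
      + N * Kpow q T' c (cutoff T' (fun _ => 1)) n (pi1 s) - N * c ^ n) / INR (fact n))
      by (rewrite Rpow_mult_distr; unfold Rdiv; ring) end.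
  apply exp_term_mono; [exact Ht|]. apply (Kpow_rectangle_lower c g N Hc HN Hgn Hdt Hd Hd').
Qed.

End Rectangle.

Section CoupledLimit.
Variables (pi1 pi2 : W -> V) (Hpi1 : intertwines qt q pi1) (Hpi2 : intertwines qt q pi2).
Hypothesis Hrect : forall T' T, exists Rt, forall s, In s Rt <-> In (pi1 s) T' /\ In (pi2 s) T.
Hypothesis Hsc : stoch_complete q.
Hypothesis HexV : exists S : nat -> list V, exhaustion S.
Hypothesis HexW : exists S : nat -> list W, exhaustion S.

(* For [0 <= g <= N], the truncated semigroups of [g ∘ pi2] on the big graph
   converge to the supremum of those of [g] on the small graph: the upper bound
   holds for every finite set, and stochastic completeness makes the loss
   [N (1 - P^T'_t 1)] in the rectangle lower bound arbitrarily small. *)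
Lemma PS_coupled_limit (g : V -> R) (N : R) (s : W) (l : R) :
  0 <= N -> (forall y, 0 <= g y <= N) -> is_PS_sup q t g (pi2 s) l ->
  forall St, exhaustion St -> Un_cv (fun i => PS qt (St i) t (fun p => g (pi2 p)) s) l.
Proof.
  intros HN Hgn [Hub Happrox] St HSt e He.
  destruct (Happrox (e / 2)) as [T HT]; [lra|].
  set (e' := e / (2 * (N + 1))).
  assert (He' : 0 < e') by (unfold e'; apply Rdiv_lt_0_compat; lra).
  assert (HNe' : N * e' < e / 2).
  { unfold e'. replace (N * (e / (2 * (N + 1)))) with (e / 2 - e') by (unfold e'; field; lra).
    lra. }
  destruct (stoch_complete_approx q Hg t Ht Hsc HexV (pi1 s) e' He') as [T' HT'].
  destruct (Hrect T' T) as [Rt HRt].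
  destruct (exhaustion_cover St HSt Rt) as [i0 Hi0]. exists i0. intros n Hn.
  assert (Hup : PS qt (St n) t (fun p => g (pi2 p)) s <= l).
  { eapply Rle_trans; [apply (PS_upper pi2 Hpi2 g N); auto | apply Hub]. }
  assert (Hmono : PS qt Rt t (fun p => g (pi2 p)) s <= PS qt (St n) t (fun p => g (pi2 p)) s).
  { apply (PS_mono qt Hgt t Ht).
    - eapply incl_tran; [exact Hi0 | apply exhaustion_mono; auto].
    - exists N. intros y. specialize (Hgn (pi2 y)). rewrite Rabs_pos_eq; lra.
    - intros y. apply Hgn. }
  assert (Hlow := PS_rectangle_lower pi1 pi2 Hpi1 Hpi2 T' T Rt HRt g N s HN Hgn).
  assert (N * (1 - PS q T' t (fun _ => 1) (pi1 s)) <= N * e') by (apply Rmult_le_compat_l; lra).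
  unfold Rdist. rewrite Rabs_left1; lra.
Qed.

Lemma Pt_coupled (f : V -> R) (M : R) (s : W) :
  (forall y, Rabs (f y) <= M) -> Pt qt t (fun p => f (pi2 p)) s = Pt q t f (pi2 s).
Proof.
  intros HM.
  assert (Hshift : forall y, 0 <= f y + M <= M + M).
  { intros y. specialize (HM y). apply Rabs_le_between in HM. lra. }
  assert (H01 : forall y : V, 0 <= (fun _ => 1) y <= 1) by (intros; lra).
  assert (HM0 : 0 <= M) by (apply Rle_trans with (Rabs (f (pi2 s))); [apply Rabs_pos | apply HM]).
  destruct (PS_sup_exists q Hg t Ht (fun y => f y + M) (M + M) (pi2 s) ltac:(lra) Hshift) as [a Ha].
  destruct (PS_sup_exists q Hg t Ht (fun _ => 1) 1 (pi2 s) Rle_0_1 H01) as [b Hb].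
  rewrite (Pt_split q Hg t Ht f M (pi2 s) a b HexV HM).
  - apply (Pt_split qt Hgt t Ht _ M s a b HexW (fun y => HM (pi2 y))).
    + exact (PS_coupled_limit (fun y => f y + M) (M + M) s a ltac:(lra) Hshift Ha).
    + exact (PS_coupled_limit (fun _ => 1) 1 s b Rle_0_1 H01 Hb).
  - intros S HS. apply (PS_sup_limit q Hg t Ht S _ (M + M)); auto. lra.
  - intros S HS. apply (PS_sup_limit q Hg t Ht S _ 1); auto. lra.
Qed.

End CoupledLimit.
End Coupling.

(* A countable set has an exhaustion: [S_i = {x | enc x <= i}]. *)
Definition decode {V : Type} (enc : V -> nat) (n : nat) : list V :=
  match excluded_middle_informative (exists x, enc x = n) with
  | left H => [proj1_sig (constructive_indefinite_description _ H)]
  | right _ => []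
  end.

Definition enc_segment {V : Type} (enc : V -> nat) (i : nat) : list V :=
  flat_map (decode enc) (seq 0 (S i)).

Lemma In_enc_segment {V : Type} (enc : V -> nat) (Henc : forall x y, enc x = enc y -> x = y)
  (x : V) (i : nat) : In x (enc_segment enc i) <-> (enc x <= i)%nat.
Proof.
  unfold enc_segment. rewrite in_flat_map. split.
  - intros [n [Hn Hx]]. apply in_seq in Hn. unfold decode in Hx.
    destruct (excluded_middle_informative _) as [H|H]; [|destruct Hx].
    destruct (constructive_indefinite_description _ H) as [y Hy]; simpl in Hx.
    destruct Hx as [<-|[]]. lia.
  - intros H. exists (enc x). split; [apply in_seq; lia|]. unfold decode.
    destruct (excluded_middle_informative _) as [H'|H'].
    + destruct (constructive_indefinite_description _ H') as [y Hy]; simpl. left. apply Henc, Hy.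
    + exfalso. apply H'. eauto.
Qed.

Lemma countable_exhaustion {V : Type} : countable V -> exists S : nat -> list V, exhaustion S.
Proof.
  intros [enc Henc]. exists (enc_segment enc). split.
  - intros i x Hx. apply In_enc_segment in Hx; auto. apply In_enc_segment; auto.
  - intros x. exists (enc x). apply In_enc_segment; auto.
Qed.

Lemma product_exhaustion {V : Type} (S : nat -> list V) :
  exhaustion S -> exhaustion (fun i => list_prod (S i) (S i)).
Proof.
  intros HS. split.
  - intros i [a b] Hx. apply in_prod_iff in Hx. apply in_prod_iff. split; apply HS, Hx.
  - intros [a b]. destruct (proj2 HS a) as [i Hi], (proj2 HS b) as [j Hj].
    exists (Nat.max i j). apply in_prod_iff.
    split; [apply (exhaustion_mono S HS i) | apply (exhaustion_mono S HS j)]; auto; lia.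
Qed.

Lemma coupling_intertwines {V : Type} (q : V -> V -> R) (qt : V * V -> V * V -> R) :
  coupling_graph q qt -> intertwines qt q fst /\ intertwines qt q snd.
Proof.
  intros [_ [Hfst Hsnd]]. split; intros h s.
  - replace (fun p : V * V => h (fst p)) with (tensor h (fun _ => 1))
      by (apply functional_extensionality; intros; unfold tensor; ring).
    rewrite Hfst. unfold tensor. ring.
  - replace (fun p : V * V => h (snd p)) with (tensor (fun _ => 1) h)
      by (apply functional_extensionality; intros; unfold tensor; ring).
    rewrite Hsnd. unfold tensor. ring.
Qed.

Theorem mainTheorem5 (V : Type) (q : V -> V -> R) (qt : V * V -> V * V -> R)
  (HV : countable V) (Hg : is_graph q) (Hrev : reversible q)
  (Hsc : stoch_complete q) (Hc : coupling_graph q qt)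
  (f : V -> R) (Hf : bounded_fun f) (t : R) (Ht : 0 <= t) :
  Pt qt t (tensor (fun _ => 1) f) = tensor (fun _ => 1) (Pt q t f) /\
  Pt qt t (tensor f (fun _ => 1)) = tensor (Pt q t f) (fun _ => 1).
Proof.
  assert (Hgt : is_graph qt) by apply Hc.
  destruct (coupling_intertwines q qt Hc) as [Hfst Hsnd].
  assert (HexV := countable_exhaustion HV).
  assert (HexW : exists S : nat -> list (V * V), exhaustion S)
    by (destruct HexV as [S HS]; eexists; apply product_exhaustion, HS).
  destruct Hf as [M HM].
  split; apply functional_extensionality; intros s; unfold tensor.
  - rewrite Rmult_1_l.
    rewrite (functional_extensionality (fun p => 1 * f (snd p)) (fun p => f (snd p)))
      by (intros; ring).
    apply (Pt_coupled q Hg qt Hgt t Ht fst snd Hfst Hsnd) with (M := M); auto.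
    intros T' T. exists (list_prod T' T). intros [a b]. apply in_prod_iff.
  - rewrite Rmult_1_r.
    rewrite (functional_extensionality (fun p => f (fst p) * 1) (fun p => f (fst p)))
      by (intros; ring).
    apply (Pt_coupled q Hg qt Hgt t Ht snd fst Hsnd Hfst) with (M := M); auto.
    intros T' T. exists (list_prod T T'). intros [a b]. rewrite in_prod_iff. simpl. tauto.
Qed.
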